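(* Let $G(\mathcal{M})=(R,T;E;c)$ and $G(\mathcal{M}')=(R,T;E;c')$ be two robot-task graphs where $c$ and $c'$ are injective on $E$. Let $\textsc{Auction}(\mathcal{M})=(W=(w_k),a)$, $\textsc{Auction}(\mathcal{M}')=(W'=(w'_k),a')$, and let $U=(u_k)$ denote the edges with second-best bids on $\textsc{Auction}(\mathcal{M})$. Suppose there exists some $e=w_K\in W$ such that $c'(f)=c(f)$ for all $f\in E\setminus\{e\}$. Then $\textsc{Auction}(\mathcal{M})=\textsc{Auction}(\mathcal{M}')$ if and only if $c(u_K)>c'(e)>\max_{k\in B_e\setminus\{K\}}c(w_k)$ in the case $B_e\setminus\{K\}\ne\emptyset$, and $c(u_K)>c'(e)\ge0$ otherwise.
   Context: $R$ (robots) and $T$ (tasks) are finite disjoint sets with $R\neq\emptyset$, $|R\sqcup T|\ge3$. The robot-task graph $(R,T;E;c)$ has vertex set $R\sqcup T$, edge set $E$ consisting of all 2-element subsets of $R\sqcup T$, and a non-negative edge cost $c:E\to\mathbb{R}_+$ (with $\mathbb{R}_+=[0,\infty)\cup\{\infty\}$); injective means distinct edges have distinct costs. $\textsc{Auction}$ on $(R,T;E;c)$: set $A=\emptyset$ and $a(r)=0$ for all $r\in R$. For $k=1,\dots,|T|$ (bid rounds): let $w_k=\{s,t\}$ be the edge with $s\in R\cup A$, $t\in T\setminus A$ minimising $c(\{s,t\})$; set $a(t)=k$ and $A\leftarrow A\cup\{t\}$. The output is the list $W=(w_1,\dots,w_{|T|})$ of winning edges and the assignment function $a:R\sqcup T\to\{0,\dots,|T|\}$.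 Two auction outputs are equal if they have the same list and the same assignment function. For an edge $e=\{x,y\}$, $B_e=\{k\in\mathbb{Z}:\min(a(x),a(y))<k\le\max(a(x),a(y))\}$ (computed from the output of $\textsc{Auction}(\mathcal{M})$); it is the set of bid rounds in which $e$ is considered. The edge with the second-best bid in round $k$ is the edge $u_k\ne w_k$ with $k\in B_{u_k}$ such that $c(u_k)\le c(f)$ for all edges $f\ne w_k$ with $k\in B_f$. *)

From HB Require Import structures.
From mathcomp Require Import all_boot all_order all_algebra.
From mathcomp Require Import reals constructive_ereal.
Set Implicit Arguments. Unset Strict Implicit. Unset Printing Implicit Defensive.
Import Order.TTheory GRing.Theory Num.Theory.
Local Open Scope ereal_scope.

(* Edges are all 2-element subsets of vertices; costs are extended reals
   (nonnegativity and injectivity are hypotheses of the theorem). *)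
Section Auction.
Variables (R : realType) (Rb Tk : finType).
Notation V := (Rb + Tk)%type.
Variable c : {set V} -> \bar R.

Definition edge (e : {set V}) : bool := (#|e| == 2)%N.

Definition candidate (A : {set Tk}) (e : {set V}) : bool :=
  edge e && [exists s : V, exists t : Tk,
    [&& e == [set s; inr t], t \notin A &
        match s with inl _ => true | inr t' => t' \in A end]].

(* the minimum-cost candidate edge (unique when costs are injective) *)
Definition winner (A : {set Tk}) : option {set V} :=
  [pick e : {set V} | candidate A e &&
     [forall f : {set V}, candidate A f ==> (c e <= c f)]].

Fixpoint auction_rec (n k : nat) (A : {set Tk}) (a : {ffun V -> nat})
  (W : seq {set V}) : seq {set V} * {ffun V -> nat} :=
  match n with
  | 0 => (W, a)
  | n'.+1 =>
    match winner A with
    | Some e =>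
      match [pick t : Tk | (t \notin A) && (inr t \in e)] with
      | Some t => auction_rec n' k.+1 (t |: A)
                   [ffun v => if v == inr t then k else a v] (rcons W e)
      | None => (W, a)
      end
    | None => (W, a)
    end
  end.

Definition auction : seq {set V} * {ffun V -> nat} :=
  auction_rec #|Tk| 1 set0 [ffun => 0%N] [::].

(* w_k (1-based) *)
Definition win (k : nat) : {set V} := nth set0 auction.1 k.-1.

(* k ∈ B_e, computed from the assignment a of Auction(M) *)
Definition inB (e : {set V}) (k : nat) : bool :=
  [exists x in e, exists y in e, (x != y) &&
     (minn (auction.2 x) (auction.2 y) < k <= maxn (auction.2 x) (auction.2 y))%N].

Definition second_best (k : nat) (u : {set V}) : Prop :=
  [/\ edge u, u != win k, inB u k &
      forall f, edge f -> f != win k -> inB f k -> c u <= c f].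

End Auction.

From HB Require Import structures.
From mathcomp Require Import all_boot all_order all_algebra.
From mathcomp Require Import reals constructive_ereal.
From mathcomp Require Import zify.
Import Order.TTheory GRing.Theory Num.Theory.
Local Open Scope ereal_scope.
Set Implicit Arguments. Unset Strict Implicit. Unset Printing Implicit Defensive.

(* The auction is determined round by round: the edges competing in round k are
   exactly the edges f with k in B_f, and w_k is the cheapest of them. Hence
   Auction(M') = Auction(M) iff every w_k remains the c'-cheapest edge of its
   round. As c' only moves the cost of e = w_K, this can only fail in round K,
   where e must stay below the second-best bid c(u_K), or in a round k <> K with
   k in B_e, where e must not undercut w_k; injectivity of c' makes both
   conditions strict. *)

Section Run.
Variables (R : realType) (Rb Tk : finType).
Local Notation V := (Rb + Tk)%type.
Local Notation n := #|Tk|.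
Variable c : {set V} -> \bar R.

Definition inRA (A : {set Tk}) : pred V :=
  [pred v | if v is inr t then t \in A else true].

Lemma edge_set2 (f : {set V}) x y :
  edge f -> x \in f -> y \in f -> x != y -> f = [set x; y].
Proof.
move=> /eqP f2 fx fy xy; apply/eqP; rewrite eq_sym eqEcard cards2 xy f2 leqnn andbT.
by apply/subsetP => z; rewrite !inE => /orP[]/eqP->.
Qed.

Lemma candidate_edge (A : {set Tk}) (f : {set V}) : candidate A f -> edge f.
Proof. by case/andP. Qed.

Lemma candidateP (A : {set Tk}) (f : {set V}) : reflect
  (edge f /\ exists x t, [/\ x \in f, inr t \in f, x \in inRA A & t \notin A])
  (candidate A f).
Proof.
apply: (iffP andP) => -[f_edge cand]; split => //.
  case/existsP: cand => x /existsP[t /and3P[/eqP-> tA xA]].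
  by exists x, t; rewrite !inE !eqxx orbT; split => //; case: x xA.
case: cand => x [t [fx ft xA tA]].
have xt : x != inr t by apply: contraTneq xA => ->; rewrite inE.
apply/existsP; exists x; apply/existsP; exists t.
by rewrite (edge_set2 f_edge fx ft xt) eqxx tA; case: x xA {fx xt}.
Qed.

Lemma winnerP (A : {set Tk}) w : winner c A = Some w ->
  candidate A w /\ forall f, candidate A f -> c w <= c f.
Proof.
rewrite /winner; case: pickP => // w' /andP[w'_cand /forallP w'_min] [<-].
by split => // f; move: (w'_min f) => /implyP.
Qed.

Lemma winner_some (A : {set Tk}) w :
  candidate A w -> (forall f, candidate A f -> c w <= c f) ->
  exists e, winner c A = Some e.
Proof.
move=> w_cand w_min; rewrite /winner; case: pickP => [e _ | /(_ w)]; first by exists e.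
by rewrite w_cand; move/negbT/forallPn => [f]; rewrite negb_imply => /andP[/w_min->].
Qed.

Lemma winner_unique (A : {set Tk}) w :
  (forall f g, edge f -> edge g -> f != g -> c f != c g) ->
  candidate A w -> (forall f, candidate A f -> c w <= c f) ->
  winner c A = Some w.
Proof.
move=> c_inj w_cand w_min; have [x wA] := winner_some w_cand w_min.
have [x_cand x_min] := winnerP wA; rewrite wA; congr Some.
apply: contra_eq (c_inj _ _ (candidate_edge x_cand) (candidate_edge w_cand)) _.
by apply: le_anti; rewrite x_min // w_min.
Qed.

Definition state := (nat * {set Tk} * {ffun V -> nat} * seq {set V})%type.

Definition auction_step (s : state) : state :=
  let: (k, A, a, W) := s in
  if winner c A is Some e then
    if [pick t | (t \notin A) && (inr t \in e)] is Some t then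
      (k.+1, t |: A, [ffun v => if v == inr t then k else a v], rcons W e)
    else s
  else s.

Lemma auction_recE m k A a W : auction_rec c m k A a W =
  let: (_, _, a', W') := iter m auction_step (k, A, a, W) in (W', a').
Proof.
elim: m k A a W => [|m IH] k A a W //; rewrite iterSr /=.
case wA: (winner c A) => [e|]; last by rewrite iter_fix //= wA.
case: pickP => [t _|no_t]; first exact: IH.
by rewrite iter_fix //= wA; case: pickP => // t; rewrite no_t.
Qed.

Definition run j : state := iter j auction_step (1%N, set0, [ffun => 0%N], [::]).
Definition assigned j : {set Tk} := (run j).1.1.2.
Definition assignment j : {ffun V -> nat} := (run j).1.2.
Definition winners j : seq {set V} := (run j).2.

Lemma auction_run : auction c = (winners n, assignment n).
Proof.
rewrite /auction auction_recE /winners /assignment /run.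
by case: (iter _ _ _) => [[[k A] a] W].
Qed.

Lemma assigned_sub : {homo assigned : i j / (i <= j)%N >-> i \subset j}.
Proof.
move=> i j /subnK <-; elim: (j - i)%N => [|d IH]; first exact: subxx.
apply: subset_trans IH _; rewrite addSn /assigned /run iterS.
case: (iter _ _ _) => [[[k A] a] W] /=; case: (winner c A) => // e.
by case: pickP => //= t _; exact: subsetUr.
Qed.

Lemma inBP (f : {set V}) k : reflect
  (exists x y, [/\ x \in f, y \in f, (auction c).2 x < k & k <= (auction c).2 y]%N)
  (inB c f k).
Proof.
set a := (auction c).2; apply: (iffP existsP) => [[x /andP[fx]] | [x [y [fx fy ak ka]]]].
  case/existsP=> y /and3P[fy _].
  by case: (leqP (a x) (a y)) => _ /andP[ak ka]; [exists x, y | exists y, x].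
have xy : x != y by apply: contraTneq ak => ->; rewrite -leqNgt.
by exists x; rewrite fx; apply/existsP; exists y; rewrite fy xy /= -/a; lia.
Qed.

Lemma inB_gt0 (f : {set V}) k : inB c f k -> (0 < k)%N.
Proof. by case/inBP => x [y [_ _ ak _]]; lia. Qed.

Hypothesis hR : (0 < #|Rb|)%N.

Lemma winner_free (A : {set Tk}) t0 : t0 \notin A -> exists e, winner c A = Some e.
Proof.
case/card_gt0P: hR => r _ t0A.
have cand0 : candidate A [set inl r; inr t0].
  apply/candidateP; split; first by rewrite /edge cards2.
  by exists (inl r), t0; rewrite !inE !eqxx orbT.
by case: (arg_minP c cand0) => x x_cand x_min; apply: winner_some x_cand x_min.
Qed.

Lemma auction_step_free (s : state) t0 : t0 \notin s.1.1.2 -> exists e t,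
  [/\ winner c s.1.1.2 = Some e, t \notin s.1.1.2,
      {subset e <= inRA (t |: s.1.1.2)} &
      auction_step s = (s.1.1.1.+1, t |: s.1.1.2,
        [ffun v => if v == inr t then s.1.1.1 else s.1.2 v], rcons s.2 e)].
Proof.
case: s => [[[k A] a] W] /= /winner_free[e wA].
have [/candidateP[e_edge [x [t [ex et xA tA]]]] _] := winnerP wA.
have xt : x != inr t by apply: contraTneq xA => ->; rewrite inE.
have e_xt := edge_set2 e_edge ex et xt.
have pick_t : [pick t' | (t' \notin A) && (inr t' \in e)] = Some t.
  case: pickP => [t' /andP[t'A] | /(_ t)]; last by rewrite tA et.
  rewrite e_xt !inE => /orP[/eqP x_t' | /eqP[->] //].
  by move: xA; rewrite -x_t' inE (negbTE t'A).
exists e, t; split => //; last by rewrite wA pick_t.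
move=> v; rewrite e_xt !inE => /orP[]/eqP->; last by rewrite /= setU11.
by case: x {ex xt e_xt} xA => //= t' t'A; rewrite !inE in t'A *; rewrite t'A orbT.
Qed.

Lemma run_card j : (j <= n)%N -> (run j).1.1.1 = j.+1 /\ #|assigned j| = j.
Proof.
elim: j => [|j IH] jn; first by rewrite /assigned /= cards0.
have [IHk IHA] := IH (ltnW jn).
have /card_gt0P[t0] : (0 < #|~: assigned j|)%N by move: (cardsC (assigned j)); lia.
rewrite inE => /(@auction_step_free (run j))[e [t [_ tA _ step]]].
by rewrite /assigned /run iterS -/(run j) step /= IHk cardsU1 tA IHA.
Qed.

Lemma run_succ j : (j < n)%N -> exists e t,
  [/\ winner c (assigned j) = Some e /\ {subset e <= inRA (assigned j.+1)},
      t \notin assigned j, assigned j.+1 = t |: assigned j,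
      assignment j.+1 = [ffun v => if v == inr t then j.+1 else assignment j v] &
      winners j.+1 = rcons (winners j) e].
Proof.
move=> jn; have [jk jA] := run_card (ltnW jn).
have /card_gt0P[t0] : (0 < #|~: assigned j|)%N by move: (cardsC (assigned j)); lia.
rewrite inE => /(@auction_step_free (run j))[e [t [wA tA e_sub step]]].
have runS : run j.+1 = auction_step (run j) by [].
exists e, t; rewrite /assigned /assignment /winners runS step jk.
by split.
Qed.

Lemma winners_mkseq j : (j <= n)%N ->
  winners j = mkseq (fun i => odflt set0 (winner c (assigned i))) j.
Proof.
elim: j => [|j IH] jn //; have [e [t [[wA _] _ _ _ ->]]] := run_succ jn.
by rewrite mkseqS IH ?(ltnW jn) // wA.
Qed.

Lemma assignment_robot j r : (j <= n)%N -> assignment j (inl r) = 0%N.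
Proof.
elim: j => [|j IH] jn; first by rewrite /assignment ffunE.
by have [e [t [_ _ _ -> _]]] := run_succ jn; rewrite ffunE IH // ltnW.
Qed.

Lemma assignment_task j t i : (j <= n)%N ->
  (0 < assignment j (inr t) <= i)%N = (t \in assigned (minn i j)).
Proof.
elim: j i => [|j IH] i jn; first by rewrite /assignment ffunE minn0 inE.
have [e [t0 [_ t0A AS aS _]]] := run_succ jn.
rewrite aS ffunE; case: (eqVneq t t0) => [-> | tt0].
  rewrite eqxx; case: (leqP j.+1 i) => ij; first by rewrite AS setU11.
  rewrite andbF; apply/esym/negP => t0i.
  by move: t0A; rewrite (subsetP (assigned_sub (_ : i <= j)%N)) //; lia.
have -> : (inr t == inr t0 :> V) = false by apply/negbTE; apply: contra_neq tt0 => -[].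
rewrite IH ?(ltnW jn) //; case: (leqP j.+1 i) => ij.
  by rewrite (minn_idPr (ltnW ij)) AS in_setU1 (negbTE tt0).
by rewrite (minn_idPl _).
Qed.

Lemma assigned_full : assigned n = setT.
Proof. by apply/eqP; rewrite eqEcard subsetT cardsT (run_card (leqnn n)).2 leqnn. Qed.

Lemma assignment_ltE k v : (0 < k <= n.+1)%N ->
  ((auction c).2 v < k)%N = (v \in inRA (assigned k.-1)).
Proof.
move=> k_range; rewrite auction_run inE /=.
case: v => [r | t]; first by rewrite assignment_robot //; lia.
have := assignment_task t n (leqnn n); rewrite minnn assigned_full inE.
move=> /andP[a_gt0 _]; case: k k_range => // k k_range; have kn : (k <= n)%N by lia.
have -> : assigned k.+1.-1 = assigned (minn k n) by rewrite (minn_idPl kn).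
by rewrite ltnS -assignment_task // a_gt0.
Qed.

Lemma winner_assigned k : (0 < k <= n)%N ->
  winner c (assigned k.-1) = Some (win c k).
Proof.
move=> k_range; have kn : (k.-1 < n)%N by lia.
have [e [_ [[wA _] _ _ _ _]]] := run_succ kn.
by rewrite /win auction_run /= winners_mkseq // nth_mkseq // wA.
Qed.

Lemma win_inRA k : (0 < k <= n)%N -> {subset win c k <= inRA (assigned k)}.
Proof.
move=> k_range; have kn : (k.-1 < n)%N by lia.
have [e [_ [[wA e_sub] _ _ _ _]]] := run_succ kn.
move: wA e_sub; rewrite winner_assigned // prednK; last by lia.
by case=> <-.
Qed.

Lemma edge_win k : (0 < k <= n)%N -> edge (win c k).
Proof. by move/winner_assigned/winnerP => [/candidate_edge]. Qed.

Lemma candidate_assignedE k (f : {set V}) : (0 < k <= n)%N -> edge f ->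
  candidate (assigned k.-1) f = inB c f k.
Proof.
move=> k_range f_edge; have k_range' : (0 < k <= n.+1)%N by lia.
apply/candidateP/inBP => [[_ [x [t [fx ft xA tA]]]] | [x [y [fx fy ak ka]]]].
  by exists x, (inr t); rewrite !assignment_ltE // in xA *; rewrite leqNgt assignment_ltE.
rewrite assignment_ltE // in ak; move: ka; rewrite leqNgt assignment_ltE // inE.
by case: y fy => //= t ft tA; split => //; exists x, t.
Qed.

Lemma win_min k (f : {set V}) :
  (0 < k <= n)%N -> edge f -> inB c f k -> c (win c k) <= c f.
Proof.
move=> k_range f_edge; rewrite -candidate_assignedE //.
by have [_] := winnerP (winner_assigned k_range); apply.
Qed.

Lemma win_inj : {in [pred k | 0 < k <= n]%N &, injective (win c)}.
Proof.
suff win_neq k k' : (0 < k)%N -> (k < k' <= n)%N -> win c k != win c k'.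
  move=> k k' /andP[k0 kn] /andP[k'0 k'n] w_eq.
  case: (ltngtP k k') => // lt.
    by move: (win_neq k k' k0); rewrite lt k'n w_eq eqxx => /(_ isT).
  by move: (win_neq k' k k'0); rewrite lt kn w_eq eqxx => /(_ isT).
move=> k0 k_range; apply/eqP => w_eq.
have k'_range : (0 < k' <= n)%N by lia.
have [/candidateP[_ [_ [t [_ wt _ tA]]]] _] := winnerP (winner_assigned k'_range).
have [k_range0 kk'] : (0 < k <= n)%N /\ (k <= k'.-1)%N by lia.
rewrite -w_eq in wt; have := win_inRA k_range0 wt; rewrite inE.
by move=> /(subsetP (assigned_sub kk')); rewrite (negbTE tA).
Qed.

End Run.

Lemma auction_ext (R : realType) (Rb Tk : finType) (c c' : {set (Rb + Tk)%type} -> \bar R) :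
  (forall j, (j < #|Tk|)%N -> winner c (assigned c j) = winner c' (assigned c j)) ->
  auction c = auction c'.
Proof.
move=> same_winner; suff run_eq j : (j <= #|Tk|)%N -> run c j = run c' j.
  by rewrite !auction_run /winners /assignment run_eq.
elim: j => // j IH jn; rewrite /run !iterS -/(run c j) -/(run c' j) -IH 1?ltnW //.
have := same_winner j jn; rewrite /assigned; case: (run c j) => [[[k A] a] W] /= w_eq.
by rewrite /auction_step w_eq.
Qed.

Lemma auction_eqP (R : realType) (Rb Tk : finType) (c c' : {set (Rb + Tk)%type} -> \bar R) :
  (0 < #|Rb|)%N ->
  (forall f g, edge f -> edge g -> f != g -> c' f != c' g) ->
  auction c = auction c' <->
  forall k, (0 < k <= #|Tk|)%N -> forall f, edge f -> inB c f k -> c' (win c k) <= c' f.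
Proof.
move=> hR c'_inj; split => [a_eq k k_range f f_edge | win_min'].
  by rewrite /win /inB a_eq; exact: win_min.
apply: auction_ext => j jn; have j_range : (0 < j.+1 <= #|Tk|)%N by lia.
have := winner_assigned c hR j_range => /= wA; rewrite wA; apply/esym/winner_unique => //.
  by have [] := winnerP wA.
move=> f f_cand; have f_edge := candidate_edge f_cand.
by apply: win_min' => //; rewrite -(candidate_assignedE c hR j_range f_edge).
Qed.

Section Perturbation.
Variables (R : realType) (Rb Tk : finType) (c c' : {set (Rb + Tk)%type} -> \bar R).
Local Notation n := #|Tk|.
Hypothesis hR : (0 < #|Rb|)%N.
Hypothesis c'_inj : forall f g, edge f -> edge g -> f != g -> c' f != c' g.
Variables (K : nat) (e u : {set (Rb + Tk)%type}).
Hypotheses (hK : (0 < K <= n)%N) (he : e = win c K).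
Hypothesis hcc' : forall f, edge f -> f != e -> c' f = c f.
Hypothesis hu : second_best c K u.

Lemma edge_perturbed : edge e.
Proof. by rewrite he edge_win. Qed.

Lemma perturbed_round_K :
  (forall f, edge f -> inB c f K -> c' (win c K) <= c' f) <-> c' e < c u.
Proof.
case: hu => u_edge u_ne u_B u_min; have u_e : u != e by rewrite he.
rewrite -he; split => [e_min | e_lt f f_edge f_B].
  have := e_min u u_edge u_B; rewrite (hcc' u_edge u_e) lt_neqAle => ->.
  by rewrite -(hcc' u_edge u_e) c'_inj // ?edge_perturbed // eq_sym.
case: (eqVneq f e) => [-> // | f_e]; rewrite (hcc' f_edge f_e).
by apply/ltW/(lt_le_trans e_lt)/u_min => //; rewrite -he.
Qed.

Lemma perturbed_round k : (0 < k <= n)%N -> k != K ->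
  (forall f, edge f -> inB c f k -> c' (win c k) <= c' f) <->
  (inB c e k -> c (win c k) < c' e).
Proof.
move=> k_range kK; have w_edge := edge_win c hR k_range.
have w_e : win c k != e.
  by apply: (contra_neq _ kK) => w_eq; apply: (@win_inj _ _ _ c hR); rewrite ?inE // w_eq.
rewrite (hcc' w_edge w_e); split => [w_min e_B | w_lt f f_edge f_B].
  rewrite lt_neqAle w_min ?edge_perturbed // andbT -(hcc' w_edge w_e).
  exact: c'_inj edge_perturbed w_e.
case: (eqVneq f e) f_B => [-> /w_lt/ltW // | f_e f_B].
by rewrite (hcc' f_edge f_e) win_min.
Qed.

Lemma perturbed_auction_eqP : auction c = auction c' <->
  c' e < c u /\
  (forall k : 'I_n.+1, (k != K :> nat) && inB c e k -> c (win c k) < c' e).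
Proof.
rewrite (auction_eqP c hR c'_inj); split => [win_min' | [e_lt w_lt] k k_range].
  split => [|k /andP[kK e_B]]; first exact/perturbed_round_K/win_min'.
  have k_range : (0 < k <= n)%N by rewrite (inB_gt0 e_B) -ltnS ltn_ord.
  exact: (perturbed_round k_range kK).1 (win_min' k k_range) e_B.
case: (eqVneq k K) => [-> | kK]; first exact/perturbed_round_K.
apply/(perturbed_round k_range kK) => e_B; have k_lt : (k < n.+1)%N by lia.
by apply: (w_lt (Ordinal k_lt)); rewrite /= kK e_B.
Qed.

End Perturbation.

Lemma bigmaxe_lt_ifP (R : realType) (I : finType) (P : pred I) (F : I -> \bar R) x :
  (forall i, P i -> 0 <= F i) -> 0 <= x ->
  (forall i, P i -> F i < x) <->
  (if [exists i, P i] then \big[maxe/0%:E]_(i | P i) F i < x else 0 <= x).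
Proof.
move=> F_ge0 x_ge0; case: ifP => [/existsP[i Pi] | /existsPn noP].
  split => [F_lt | /bigmax_ltP[]//]; apply/bigmax_ltP; split => //.
  exact: le_lt_trans (F_ge0 i Pi) (F_lt i Pi).
by split => // _ i Pi; move: (noP i); rewrite Pi.
Qed.

Theorem lemma7 (R : realType) (Rb Tk : finType)
  (hR : (0 < #|Rb|)%N) (h3 : (3 <= #|Rb| + #|Tk|)%N)
  (c c' : {set (Rb + Tk)%type} -> \bar R)
  (hc0 : forall f, edge f -> 0 <= c f)
  (hc'0 : forall f, edge f -> 0 <= c' f)
  (hinj : forall f g, edge f -> edge g -> f != g -> c f != c g)
  (hinj' : forall f g, edge f -> edge g -> f != g -> c' f != c' g)
  (K : nat) (hK : (1 <= K <= #|Tk|)%N)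
  (e : {set (Rb + Tk)%type}) (he : e = win c K)
  (hcc' : forall f, edge f -> f != e -> c' f = c f)
  (u : {set (Rb + Tk)%type}) (hu : second_best c K u) :
  auction c = auction c' <->
  (if [exists k : 'I_#|Tk|.+1, (k != K :> nat) && inB c e k]
   then (c' e < c u) /\
        (\big[maxe/0%:E]_(k < #|Tk|.+1 | (k != K :> nat) && inB c e k)
            c (win c k) < c' e)
   else (c' e < c u) /\ (0 <= c' e)).
Proof.
have win_ge0 (k : 'I_#|Tk|.+1) : (k != K :> nat) && inB c e k -> 0 <= c (win c k).
  case/andP=> _ /inB_gt0 k_gt0; apply/hc0/edge_win => //.
  by rewrite k_gt0 -ltnS ltn_ord.
have e_ge0 : 0 <= c' e by rewrite hc'0 // (edge_perturbed hR hK he).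
rewrite (perturbed_auction_eqP hR hinj' hK he hcc' hu).
by case: ifP (bigmaxe_lt_ifP win_ge0 e_ge0) => _ <-.
Qed.
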